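(* Let $V$ be a commutative unital quantale whose underlying lattice is a frame. The full subcategory $\mathsf{VGrp}_{\mathrm{sym}}$ of symmetric $V$-groups is both a reflective and a coreflective subcategory of $\mathsf{VGrp}$.
   Context: A commutative unital quantale $V$ is a complete lattice with a commutative associative operation $\otimes$ with unit $k$ preserving arbitrary joins in each variable; standing assumption: as a lattice $V$ is a frame. A $V$-category $(X,a)$: $a\colon X\times X\to V$ with $k\le a(x,x)$ and $a(x,x')\otimes a(x',x'')\le a(x,x'')$; it is symmetric if $a(x,x')=a(x',x)$ for all $x,x'$. A $V$-group $(X,a,+)$ is a $V$-category with a group structure (additive, not necessarily abelian) such that $a(x_1,x_2)\otimes a(x_1',x_2')\le a(x_1+x_1',x_2+x_2')$; $V$-homomorphisms are group homomorphisms $f$ with $a(x,x')\le b(f(x),f(x'))$; category $\mathsf{VGrp}$. A symmetric $V$-group is a $V$-group whose $V$-category is symmetric. *)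

Set Implicit Arguments.

Record Quantale := {
  qcar :> Type;
  qle : qcar -> qcar -> Prop;
  qle_refl : forall a, qle a a;
  qle_trans : forall a b c, qle a b -> qle b c -> qle a c;
  qle_antisym : forall a b, qle a b -> qle b a -> a = b;
  qsup : (qcar -> Prop) -> qcar;
  qsup_ub : forall (S : qcar -> Prop) x, S x -> qle x (qsup S);
  qsup_least : forall (S : qcar -> Prop) y, (forall x, S x -> qle x y) -> qle (qsup S) y;
  qten : qcar -> qcar -> qcar;
  qk : qcar;
  qten_comm : forall a b, qten a b = qten b a;
  qten_assoc : forall a b c, qten a (qten b c) = qten (qten a b) c;
  qten_unit : forall a, qten qk a = a;
  qten_sup_r : forall a (S : qcar -> Prop),
      qten a (qsup S) = qsup (fun y => exists x, S x /\ y = qten a x);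
  qten_sup_l : forall a (S : qcar -> Prop),
      qten (qsup S) a = qsup (fun y => exists x, S x /\ y = qten x a)
}.

Arguments qle {q}.
Arguments qsup {q}.
Arguments qten {q}.
Arguments qk {q}.

Definition qmeet (V : Quantale) (a b : V) : V := qsup (fun c => qle c a /\ qle c b).

Arguments qmeet {V}.

Definition is_frame (V : Quantale) : Prop :=
  forall (a : V) (S : V -> Prop),
    qmeet a (qsup S) = qsup (fun y => exists x, S x /\ y = qmeet a x).

(* V-group: a V-category with a (not necessarily abelian) group structure,
   the addition being a V-functor. *)
Record VGroup (V : Quantale) := {
  vcar :> Type;
  vd : vcar -> vcar -> V;
  vzero : vcar;
  vadd : vcar -> vcar -> vcar;
  vopp : vcar -> vcar;
  vadd_assoc : forall x y z, vadd x (vadd y z) = vadd (vadd x y) z;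
  vadd_0l : forall x, vadd vzero x = x;
  vadd_0r : forall x, vadd x vzero = x;
  vadd_oppl : forall x, vadd (vopp x) x = vzero;
  vadd_oppr : forall x, vadd x (vopp x) = vzero;
  vd_refl : forall x, qle qk (vd x x);
  vd_trans : forall x x' x'', qle (qten (vd x x') (vd x' x'')) (vd x x'');
  vd_add : forall x1 x2 x1' x2',
      qle (qten (vd x1 x2) (vd x1' x2')) (vd (vadd x1 x1') (vadd x2 x2'))
}.

Arguments vd {V v}.
Arguments vadd {V v}.

Definition is_vhom (V : Quantale) (X Y : VGroup V) (f : X -> Y) : Prop :=
  (forall x y : X, f (vadd x y) = vadd (f x) (f y)) /\
  (forall x x' : X, qle (vd x x') (vd (f x) (f x'))).

Arguments is_vhom {V X Y}.

Definition is_symmetric (V : Quantale) (X : VGroup V) : Prop :=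
  forall x x' : X, vd x x' = vd x' x.

Arguments is_symmetric {V}.

Definition sym_reflective (V : Quantale) : Prop :=
  forall X : VGroup V,
    exists (R : VGroup V) (eta : X -> R),
      is_symmetric R /\ is_vhom eta /\
      forall (Y : VGroup V) (f : X -> Y),
        is_symmetric Y -> is_vhom f ->
        exists g : R -> Y,
          is_vhom g /\ (forall x, g (eta x) = f x) /\
          (forall g' : R -> Y, is_vhom g' -> (forall x, g' (eta x) = f x) ->
             forall r, g' r = g r).

Definition sym_coreflective (V : Quantale) : Prop :=
  forall X : VGroup V,
    exists (C : VGroup V) (eps : C -> X),
      is_symmetric C /\ is_vhom eps /\
      forall (Y : VGroup V) (f : Y -> X),
        is_symmetric Y -> is_vhom f ->
        exists g : Y -> C,
          is_vhom g /\ (forall y, eps (g y) = f y) /\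
          (forall g' : Y -> C, is_vhom g' -> (forall y, eps (g' y) = f y) ->
             forall y, g' y = g y).


Set Implicit Arguments.

(** Both adjoints keep the underlying group and only change the distance, so
    the identity map is the unit (resp. counit).  The coreflection replaces
    [a(x, y)] by [a(x, y) /\ a(y, x)].  The reflection takes the infimum, in the
    complete lattice [V], of the pullbacks [b(f x, f y)] along all
    V-homomorphisms [f] into symmetric V-groups; it is a V-group structure
    because each pullback is one, and it is symmetric because each [b] is.
    Neither construction uses the frame law. *)

Section QuantaleFacts.
Variable V : Quantale.

Lemma qten_monol (a b c : V) : qle a b -> qle (qten a c) (qten b c).
Proof.
  intro Hab.
  assert (Hjoin : qsup (fun x : V => x = a \/ x = b) = b).
  { apply qle_antisym.
    - apply qsup_least. intros x [-> | ->]; [exact Hab | apply qle_refl].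
    - apply qsup_ub. now right. }
  rewrite <- Hjoin, qten_sup_l. apply qsup_ub. exists a. split; auto.
Qed.

Lemma qten_mono (a b c d : V) : qle a b -> qle c d -> qle (qten a c) (qten b d).
Proof.
  intros Hab Hcd. apply qle_trans with (qten b c); [now apply qten_monol |].
  rewrite (qten_comm _ b c), (qten_comm _ b d). now apply qten_monol.
Qed.

Lemma qmeet_lel (a b : V) : qle (qmeet a b) a.
Proof. apply qsup_least. now intros x []. Qed.

Lemma qmeet_ler (a b : V) : qle (qmeet a b) b.
Proof. apply qsup_least. now intros x []. Qed.

Lemma qmeet_glb (a b c : V) : qle c a -> qle c b -> qle c (qmeet a b).
Proof. intros. apply qsup_ub. auto. Qed.

Lemma qmeetC (a b : V) : qmeet a b = qmeet b a.
Proof. apply qle_antisym; apply qmeet_glb; auto using qmeet_lel, qmeet_ler. Qed.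

Definition qinf (S : V -> Prop) : V :=
  qsup (fun c => forall x, S x -> qle c x).

Lemma qinf_lb (S : V -> Prop) (x : V) : S x -> qle (qinf S) x.
Proof. intro Sx. apply qsup_least. auto. Qed.

Lemma qinf_glb (S : V -> Prop) (c : V) : (forall x, S x -> qle c x) -> qle c (qinf S).
Proof. intro Hc. now apply qsup_ub. Qed.

End QuantaleFacts.

Arguments qinf {V}.

Definition has_sym_reflection (V : Quantale) (X : VGroup V) : Prop :=
  exists (R : VGroup V) (eta : X -> R),
    is_symmetric R /\ is_vhom eta /\
    forall (Y : VGroup V) (f : X -> Y),
      is_symmetric Y -> is_vhom f ->
      exists g : R -> Y,
        is_vhom g /\ (forall x, g (eta x) = f x) /\
        (forall g' : R -> Y, is_vhom g' -> (forall x, g' (eta x) = f x) ->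
           forall r, g' r = g r).

Definition has_sym_coreflection (V : Quantale) (X : VGroup V) : Prop :=
  exists (C : VGroup V) (eps : C -> X),
    is_symmetric C /\ is_vhom eps /\
    forall (Y : VGroup V) (f : Y -> X),
      is_symmetric Y -> is_vhom f ->
      exists g : Y -> C,
        is_vhom g /\ (forall y, eps (g y) = f y) /\
        (forall g' : Y -> C, is_vhom g' -> (forall y, eps (g' y) = f y) ->
           forall y, g' y = g y).

Section WithDistance.
Variables (V : Quantale) (X : VGroup V) (d : X -> X -> V).
Hypothesis d_refl : forall x, qle qk (d x x).
Hypothesis d_trans : forall x x' x'', qle (qten (d x x') (d x' x'')) (d x x'').
Hypothesis d_add : forall x1 x2 x1' x2',
  qle (qten (d x1 x2) (d x1' x2')) (d (vadd x1 x1') (vadd x2 x2')).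
Hypothesis d_sym : forall x y, d x y = d y x.

Definition with_distance : VGroup V :=
  @Build_VGroup V (vcar X) d (vzero X) (@vadd V X) (@vopp V X)
    (@vadd_assoc V X) (@vadd_0l V X) (@vadd_0r V X) (@vadd_oppl V X)
    (@vadd_oppr V X) d_refl d_trans d_add.

Lemma with_distance_sym_reflection :
  (forall x y : X, qle (vd x y) (d x y)) ->
  (forall (Y : VGroup V) (f : X -> Y), is_symmetric Y -> is_vhom f ->
     forall x y, qle (d x y) (vd (f x) (f y))) ->
  has_sym_reflection X.
Proof.
  intros d_ge d_univ. exists with_distance, (fun x => x).
  split; [exact d_sym | split; [split; [reflexivity | exact d_ge] |]].
  intros Y f HY Hf. exists f. split; [| split].
  - split; [exact (proj1 Hf) | now apply d_univ].
  - reflexivity.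
  - intros g' _ Hg'. exact Hg'.
Qed.

Lemma with_distance_sym_coreflection :
  (forall x y : X, qle (d x y) (vd x y)) ->
  (forall (Y : VGroup V) (f : Y -> X), is_symmetric Y -> is_vhom f ->
     forall y y', qle (vd y y') (d (f y) (f y'))) ->
  has_sym_coreflection X.
Proof.
  intros d_le d_univ. exists with_distance, (fun x => x).
  split; [exact d_sym | split; [split; [reflexivity | exact d_le] |]].
  intros Y f HY Hf. exists f. split; [| split].
  - split; [exact (proj1 Hf) | now apply d_univ].
  - reflexivity.
  - intros g' _ Hg'. exact Hg'.
Qed.

End WithDistance.

Section InitialDistance.
Variables (V : Quantale) (X : VGroup V) (P : forall Y : VGroup V, (X -> Y) -> Prop).
Hypothesis P_additive :
  forall Y f, P Y f -> forall x y : X, f (vadd x y) = vadd (f x) (f y).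

Definition initial_dist (x y : X) : V :=
  qinf (fun c => exists (Y : VGroup V) (f : X -> Y), P Y f /\ c = vd (f x) (f y)).

Lemma initial_dist_le (Y : VGroup V) (f : X -> Y) (x y : X) :
  P Y f -> qle (initial_dist x y) (vd (f x) (f y)).
Proof. intro Pf. apply qinf_lb. eauto. Qed.

Lemma le_initial_dist (c : V) (x y : X) :
  (forall (Y : VGroup V) (f : X -> Y), P Y f -> qle c (vd (f x) (f y))) ->
  qle c (initial_dist x y).
Proof. intro Hc. apply qinf_glb. intros _ (Y & f & Pf & ->). auto. Qed.

Lemma initial_dist_refl (x : X) : qle qk (initial_dist x x).
Proof. apply le_initial_dist. intros. apply vd_refl. Qed.

Lemma initial_dist_trans (x x' x'' : X) :
  qle (qten (initial_dist x x') (initial_dist x' x'')) (initial_dist x x'').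
Proof.
  apply le_initial_dist. intros Y f Pf.
  eapply qle_trans; [| apply vd_trans].
  apply qten_mono; now apply initial_dist_le.
Qed.

Lemma initial_dist_add (x1 x2 x1' x2' : X) :
  qle (qten (initial_dist x1 x2) (initial_dist x1' x2'))
      (initial_dist (vadd x1 x1') (vadd x2 x2')).
Proof.
  apply le_initial_dist. intros Y f Pf.
  rewrite !(P_additive Pf).
  eapply qle_trans; [| apply vd_add].
  apply qten_mono; now apply initial_dist_le.
Qed.

Lemma initial_dist_sym :
  (forall Y f, P Y f -> is_symmetric Y) -> forall x y, initial_dist x y = initial_dist y x.
Proof.
  intros P_sym x y.
  apply qle_antisym; apply le_initial_dist; intros Y f Pf;
    rewrite (P_sym Y f Pf); now apply initial_dist_le.
Qed.

End InitialDistance.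

Section SymmetricAdjoints.
Variables (V : Quantale) (X : VGroup V).

Let sym_cone (Y : VGroup V) (f : X -> Y) : Prop := is_symmetric Y /\ is_vhom f.

Lemma sym_reflection_exists : has_sym_reflection X.
Proof.
  assert (cone_additive : forall Y f, sym_cone Y f -> forall x y : X,
             f (vadd x y) = vadd (f x) (f y)) by (intros Y f [_ [Hf _]]; exact Hf).
  apply (with_distance_sym_reflection _ (initial_dist_refl X sym_cone)
           (initial_dist_trans X sym_cone) (initial_dist_add X sym_cone cone_additive)).
  - apply initial_dist_sym. now intros Y f [].
  - intros x y. apply le_initial_dist. intros Y f [_ [_ Hf]]. apply Hf.
  - intros Y f HY Hf x y. now apply initial_dist_le.
Qed.

Let sym_dist (x y : X) : V := qmeet (vd x y) (vd y x).

Lemma sym_dist_refl (x : X) : qle qk (sym_dist x x).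
Proof. apply qmeet_glb; apply vd_refl. Qed.

Lemma sym_dist_trans (x x' x'' : X) :
  qle (qten (sym_dist x x') (sym_dist x' x'')) (sym_dist x x'').
Proof.
  apply qmeet_glb; eapply qle_trans; try apply vd_trans.
  - apply qten_mono; apply qmeet_lel.
  - rewrite qten_comm. apply qten_mono; apply qmeet_ler.
Qed.

Lemma sym_dist_add (x1 x2 x1' x2' : X) :
  qle (qten (sym_dist x1 x2) (sym_dist x1' x2')) (sym_dist (vadd x1 x1') (vadd x2 x2')).
Proof.
  apply qmeet_glb; eapply qle_trans; try apply vd_add.
  - apply qten_mono; apply qmeet_lel.
  - apply qten_mono; apply qmeet_ler.
Qed.

Lemma sym_coreflection_exists : has_sym_coreflection X.
Proof.
  apply (with_distance_sym_coreflection _ sym_dist_refl sym_dist_trans sym_dist_add).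
  - intros x y. apply qmeetC.
  - intros x y. apply qmeet_lel.
  - intros Y f HY Hf y y'. apply qmeet_glb; [| rewrite HY]; apply (proj2 Hf).
Qed.

End SymmetricAdjoints.

Theorem proposition3p5 (V : Quantale) (HV : is_frame V) :
  sym_reflective V /\ sym_coreflective V.
Proof.
  split; intro X; [apply sym_reflection_exists | apply sym_coreflection_exists].
Qed.
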